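(* Fix any strategy $\mathcal{G}$ for the partial feedback game, let $\pi\sim\mathcal{S}_{m,n}$ be uniform, and let $H_{t-1}$ be the (random) history up to time $t-1$. For any history $h_{t-1}$ up to time $t-1$ (occurring with positive probability) and any $i\in[n]$, \[\Pr[\pi_t = i \mid H_{t-1} = h_{t-1}]\le \frac{m_i(h_{t-1})}{mn-a_i(h_{t-1}) - Y(h_{t-1})}.\]
   Context: $\mathcal{S}_{m,n}$ is the set of words over $[n]$ in which each symbol appears exactly $m$ times (a deck of $mn$ cards), and $\pi\sim\mathcal{S}_{m,n}$ is uniform. In the partial feedback game the guesser makes guesses $g_1,\dots,g_{mn}\in[n]$ sequentially; after guess $g_t$ they learn only $y_t\in\{0,1\}$, where $y_t=1$ iff $\pi_t=g_t$. A strategy chooses $g_t$ as a function of $(g_1,\dots,g_{t-1},y_1,\dots,y_{t-1})$. A history up to time $s$ is $h_s=((g_1,\dots,g_s),(y_1,\dots,y_s))$; $H_s$ denotes the random history produced by the strategy on $\pi$. For a history $h_s$: $Y(h_s)=\sum_{r\le s} y_r$ is the number of correct guesses, $a_i(h_s)=|\{r\le s: g_r=i\}|$ is the number of times $i$ has been guessed, and $m_i(h_s)=m-|\{r\le s: g_r=i,\ y_r=1\}|$.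
   Formalization: The bound is claimed only for histories $h_{t-1}$ with $mn-a_i(h_{t-1}) - Y(h_{t-1}) > 0$, an extra hypothesis requiring the denominator to be positive. The statement above fails without it. *)

From mathcomp Require Import all_boot all_order all_algebra.
Set Implicit Arguments. Unset Strict Implicit. Unset Printing Implicit Defensive.
Import Order.TTheory GRing.Theory Num.Theory.

(* Symbols [n] are modelled by 'I_n; times t = 1..mn by 0-based positions
   j : 'I_(m*n) with t = j+1.  A history is the sequence of pairs (g_r, y_r). *)
Definition hist (n : nat) := seq ('I_n * bool).

Definition strategy (n : nat) := hist n -> 'I_n.

Definition word (m n : nat) := (m * n).-tuple 'I_n.

Definition Smn (m n : nat) : {set word m n} :=
  [set p : word m n | [forall i : 'I_n, count_mem i (val p) == m]].

Fixpoint play (n : nat) (G : strategy n) (past : hist n) (p : seq 'I_n) (s : nat)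
  : hist n :=
  match s, p with
  | s'.+1, x :: p' => let g := G past in play G (rcons past (g, x == g)) p' s'
  | _, _ => past
  end.

Definition history (m n : nat) (G : strategy n) (pi : word m n) (s : nat) : hist n :=
  play G [::] (val pi) s.

Definition Pr (m n : nat) (E : pred (word m n)) : rat :=
  (#|[set p in Smn m n | E p]|%:R / #|Smn m n|%:R)%R.

Definition cPr (m n : nat) (A B : pred (word m n)) : rat :=
  (Pr (predI A B) / Pr B)%R.

Definition Ycnt (n : nat) (h : hist n) : nat := count (fun gy => gy.2) h.
Definition acnt (n : nat) (h : hist n) (i : 'I_n) : nat :=
  count (fun gy => gy.1 == i) h.
Definition mcnt (m n : nat) (h : hist n) (i : 'I_n) : rat :=
  (m%:R - (count (fun gy => (gy.1 == i) && gy.2) h)%:R)%R.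

(* Conditioned on H_{t-1} = h, pi is uniform on the words of S_{m,n} that are
   consistent with the feedback recorded in h.  Call a position k a candidate
   if it is unseen (k >= t) or if a guess other than i missed there; at every
   other position the feedback already tells whether the card is i.  Swapping
   positions t and k maps the consistent words with pi_t = i injectively to
   those with pi_k = i, so Pr[pi_t = i | h] is at most the average of
   Pr[pi_k = i | h] over the candidates.  Every consistent word has exactly
   m_i copies of i on candidate positions, and there are at least
   mn - a_i - Y candidates. *)

From mathcomp Require Import all_boot all_order all_algebra.
From mathcomp Require Import perm ring lra.
Set Implicit Arguments. Unset Strict Implicit. Unset Printing Implicit Defensive.
Import Order.TTheory GRing.Theory Num.Theory.

Lemma all2_nthP (S T : Type) (r : S -> T -> bool) x0 y0 s t :
  size s = size t ->
  reflect (forall k, k < size s -> r (nth x0 s k) (nth y0 t k)) (all2 r s t).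
Proof.
elim: s t => [|x s IH] [|y t] //= => [_|[Est]]; first by left.
apply: (iffP andP) => [[rxy /(IH _ Est) rst] [|k] //= /rst // | rst].
by split; [exact: (rst 0) | apply/(IH _ Est) => k /(rst k.+1)].
Qed.

Lemma card_nth_count (T : Type) N (s : seq T) x0 (P : pred T) :
  size s <= N -> #|[set k : 'I_N | (k < size s) && P (nth x0 s k)]| = count P s.
Proof.
move=> le_sN; rewrite -sum1_count (big_nth x0) big_mkord.
rewrite (big_ord_widen_cond _ (fun k => P (nth x0 s k)) (fun _ => 1) le_sN).
by rewrite sum1dep_card; apply: eq_card => k; rewrite !inE andbC.
Qed.

Lemma count_mem_tnth (T : eqType) N (t : N.-tuple T) a :
  count_mem a t = #|[set k : 'I_N | tnth t k == a]|.
Proof. by rewrite -sum1_count big_tuple sum1dep_card. Qed.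

Lemma sum_card_exchange (I J : finType) (A : {set I}) (B : {set J}) (R : I -> J -> bool) :
  \sum_(x in A) #|[set y in B | R x y]| = \sum_(y in B) #|[set x in A | R x y]|.
Proof.
have card_sum (K : finType) (C : {set K}) (P : pred K) :
    #|[set z in C | P z]| = \sum_(z in C) P z.
  by rewrite -sum1dep_card big_mkcondr /=; apply: eq_bigr => z _; case: (P z).
under eq_bigr do rewrite card_sum.
by rewrite exchange_big; apply: eq_bigr => y _; rewrite card_sum.
Qed.

Definition agrees {n} (x : 'I_n) (gy : 'I_n * bool) : bool := (x == gy.1) == gy.2.

Definition consistent m n (h : hist n) (q : word m n) : bool :=
  all2 agrees (take (size h) q) h.

Section Game.
Variables (n : nat) (G : strategy n).

Lemma size_play past p s : size (play G past p s) = size past + minn s (size p).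
Proof.
elim: s past p => [|s IH] past [|x p] //=; rewrite ?addn0 ?minn0 //.
by rewrite IH size_rcons minnSS addSnnS.
Qed.

Lemma take_play past p s : take (size past) (play G past p s) = past.
Proof.
elim: s past p => [|s IH] past [|x p] /=; rewrite ?take_size //.
rewrite -(take_takel _ (leqnSn _)) -(size_rcons past (G past, x == G past)) IH.
by rewrite -cats1 take_size_cat.
Qed.

Lemma drop_play_rcons past g p s :
  drop (size past) (play G (rcons past g) p s)
  = g :: drop (size past).+1 (play G (rcons past g) p s).
Proof.
rewrite -{1}(cat_take_drop (size past).+1 (play _ _ _ _)) -(size_rcons past g) take_play.
by rewrite cat_rcons drop_size_cat.
Qed.

Lemma play_agrees past p s : all2 agrees (take s p) (drop (size past) (play G past p s)).
Proof.
elim: s past p => [|s IH] past [|x p] /=; rewrite ?drop_size //.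
by rewrite drop_play_rcons /= /agrees eqxx -(size_rcons past (G past, x == G past)) IH.
Qed.

Lemma play_eq past p q s :
  all2 agrees (take s q) (drop (size past) (play G past p s)) ->
  play G past q s = play G past p s.
Proof.
elim: s past p q => [|s IH] past [|x p] [|y q] //=;
  rewrite ?drop_size ?drop_play_rcons //.
case/andP => /eqP /= -> agree_rest; apply: IH.
by rewrite size_rcons.
Qed.

Lemma history_eqE m (p q : word m n) s :
  (history G q s == history G p s) = all2 agrees (take s q) (history G p s).
Proof.
apply/eqP/idP => [<-|agree]; first by have := play_agrees [::] q s; rewrite drop0.
by apply: play_eq; rewrite drop0.
Qed.

Lemma size_history m (p : word m n) s : s <= m * n -> size (history G p s) = s.
Proof.
by move=> le_s; rewrite /history size_play add0n; apply/minn_idPl; rewrite size_tuple.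
Qed.

Lemma history_eq_consistent m (p0 p : word m n) (j : 'I_(m * n)) :
  (history G p j == history G p0 j) = consistent (history G p0 j) p.
Proof. by rewrite history_eqE /consistent size_history // ltnW. Qed.

End Game.

Definition perm_word m n (s : 'S_(m * n)) (p : word m n) : word m n :=
  [tuple tnth p (s k) | k < m * n].

Lemma perm_word_Smn m n (s : 'S_(m * n)) p : p \in Smn m n -> perm_word s p \in Smn m n.
Proof.
rewrite !inE => /forallP count_p; apply/forallP => a.
rewrite -[X in _ == X](eqP (count_p a)) !count_mem_tnth.
apply/eqP; rewrite -[RHS](card_preimset _ (@perm_inj _ s)).
by apply: eq_card => k; rewrite !inE tnth_mktuple.
Qed.

Lemma perm_wordK m n (s : 'S_(m * n)) : cancel (perm_word s) (perm_word s^-1).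
Proof. by move=> p; apply: eq_from_tnth => k; rewrite !tnth_mktuple permKV. Qed.

Section Counting.
Variables (m n : nat) (h : hist n) (i : 'I_n) (j : 'I_(m * n)).
Hypothesis size_h : size h = j.

Let d : 'I_n * bool := (i, false).

Let size_h_le : size h <= m * n.
Proof. by rewrite size_h ltnW. Qed.

Lemma consistentP q :
  reflect (forall r : 'I_(m * n), r < j -> agrees (tnth q r) (nth d h r))
          (consistent h q).
Proof.
have size_take_q : size (take (size h) q) = size h.
  by rewrite size_takel // size_tuple size_h ltnW.
apply: (iffP (all2_nthP agrees i d size_take_q)); rewrite size_take_q size_h.
- by move=> agree r lt_rj; rewrite (tnth_nth i) -(nth_take _ lt_rj); apply: agree.
- move=> agree r lt_rj; rewrite nth_take //.
  by have := agree (Ordinal (ltn_trans lt_rj (ltn_ord j))) lt_rj; rewrite (tnth_nth i).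
Qed.

Definition consistent_words := [set p in Smn m n | consistent h p].

Definition candidates : {set 'I_(m * n)} :=
  [set k : 'I_(m * n) | (j <= k) || ((nth d h k).1 != i) && ~~ (nth d h k).2].

Definition hits (k : 'I_(m * n)) := #|[set p in consistent_words | tnth p k == i]|.

Definition correct_count := count (fun gy : 'I_n * bool => (gy.1 == i) && gy.2) h.

Lemma consistent_tperm k p : k \in candidates -> consistent h p -> tnth p j = i ->
  consistent h (perm_word (tperm j k) p).
Proof.
move=> cand_k /consistentP cons_p pj_i; apply/consistentP => r lt_rj.
rewrite tnth_mktuple; case: (eqVneq k r) lt_rj => [<- lt_kj|ne_kr lt_rj].
  move: cand_k; rewrite inE leqNgt lt_kj tpermR pj_i /agrees /=.
  by case/andP => ne_gi /negbTE ->; rewrite eqbF_neg eq_sym.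
have ne_jr : j != r by rewrite -val_eqE neq_ltn lt_rj orbT.
by rewrite tpermD ?cons_p.
Qed.

Lemma hits_le k : k \in candidates -> hits j <= hits k.
Proof.
move=> cand_k; rewrite /hits -(card_imset _ (can_inj (perm_wordK (tperm j k)))).
apply: subset_leq_card; apply/subsetP => _ /imsetP[p + ->].
case/setIdP => /setIdP[S_p cons_p] /eqP pj_i.
apply/setIdP; split; last by rewrite tnth_mktuple tpermR pj_i.
by apply/setIdP; split; [exact: perm_word_Smn | exact: consistent_tperm].
Qed.

Lemma card_candidates_hits p : p \in consistent_words ->
  #|[set k in candidates | tnth p k == i]| + correct_count = m.
Proof.
case/setIdP => S_p /consistentP cons_p.
have count_i : count_mem i p = m by move: S_p; rewrite inE => /forallP /(_ i) /eqP.
rewrite -[RHS]count_i count_mem_tnth -(cardsID candidates [set k | tnth p k == i]) setIC.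
congr (_ + _); first by apply: eq_card => k; rewrite !inE.
rewrite /correct_count -(card_nth_count d _ size_h_le); apply: eq_card => k.
rewrite !inE size_h.
case: ltnP => [lt_kj|//] /=.
move: (cons_p k lt_kj); rewrite /agrees; case: (nth d h k) => g [] /=.
  by rewrite andbT andbF eqb_id => /eqP ->.
rewrite andbF andbT negbK eqbF_neg.
by case: (eqVneq g i) => [->|//] /negbTE ->.
Qed.

Lemma sum_hits :
  \sum_(k in candidates) hits k = #|consistent_words| * (m - correct_count).
Proof.
rewrite /hits sum_card_exchange -sum_nat_const; apply: eq_bigr => p cons_p.
by rewrite -[X in X - _](card_candidates_hits cons_p) addnK.
Qed.

Lemma hits_bound : #|candidates| * hits j <= #|consistent_words| * (m - correct_count).
Proof. by rewrite -sum_hits -sum_nat_const; apply: leq_sum => k; apply: hits_le. Qed.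

Lemma card_candidates_lb : m * n <= #|candidates| + acnt h i + Ycnt h.
Proof.
rewrite -addnA -{1}[m * n]card_ord -(cardsC candidates) leq_add2l.
rewrite /acnt /Ycnt -!(card_nth_count d _ size_h_le).
apply: leq_trans (leq_card_setU _ _); apply: subset_leq_card; apply/subsetP => k.
by rewrite !inE negb_or -ltnNge negb_and !negbK size_h => /andP[-> /=].
Qed.

Lemma mcnt_consistent p : p \in consistent_words -> mcnt m h i = (m - correct_count)%:R%R.
Proof.
move=> cons_p; rewrite /mcnt natrB //.
by rewrite -[X in _ <= X](card_candidates_hits cons_p) leq_addl.
Qed.

Local Open Scope ring_scope.

Lemma hits_ratio_le p : p \in consistent_words ->
  0 < (m * n)%:R - (acnt h i)%:R - (Ycnt h)%:R :> rat ->
  (hits j)%:R / #|consistent_words|%:R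
    <= mcnt m h i / ((m * n)%:R - (acnt h i)%:R - (Ycnt h)%:R).
Proof.
move=> cons_p D_gt0; rewrite (mcnt_consistent cons_p).
have E_gt0 : 0 < #|consistent_words|%:R :> rat.
  by rewrite ltr0n card_gt0; apply/set0Pn; exists p.
have D_le_F : (m * n)%:R - (acnt h i)%:R - (Ycnt h)%:R <= #|candidates|%:R :> rat.
  by have := card_candidates_lb; rewrite -(ler_nat rat) !natrD; lra.
rewrite ler_pdivrMr // mulrAC ler_pdivlMr //.
apply: le_trans (ler_wpM2l (ler0n _ _) D_le_F) _.
by rewrite -!natrM ler_nat mulnC [X in (_ <= X)%N]mulnC; apply: hits_bound.
Qed.

End Counting.

Local Open Scope ring_scope.

Lemma Pr_gt0_witness m n (E : pred (word m n)) :
  0 < Pr E -> exists2 p, p \in Smn m n & E p.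
Proof.
rewrite /Pr; case: (set_0Vmem [set p in Smn m n | E p]) => [->|[p /setIdP[]]].
  by rewrite cards0 mul0r ltxx.
by exists p.
Qed.

Lemma cPr_card m n (A B : pred (word m n)) : 0 < Pr B ->
  cPr A B = #|[set p in Smn m n | A p && B p]|%:R / #|[set p in Smn m n | B p]|%:R.
Proof.
rewrite /cPr /Pr => /lt0r_neq0; rewrite mulf_eq0 invr_eq0 negb_or => /andP[nz_B nz_S].
by field; apply/andP.
Qed.

Theorem lemma3p1 (m n : nat) (G : strategy n) (j : 'I_(m * n))
    (h : hist n) (i : 'I_n) :
  0 < Pr (fun p : word m n => history G p j == h) ->
  0 < ((m * n)%:R - (acnt h i)%:R - (Ycnt h)%:R : rat) ->
  cPr (fun p : word m n => tnth p j == i) (fun p => history G p j == h)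
    <= mcnt m h i / ((m * n)%:R - (acnt h i)%:R - (Ycnt h)%:R).
Proof.
move=> PrB_gt0 D_gt0; rewrite cPr_card //.
have [p0 S_p0 /eqP h_p0] := Pr_gt0_witness PrB_gt0.
have size_h : size h = j by rewrite -h_p0 size_history // ltnW.
have history_eq (p : word m n) : (history G p j == h) = consistent h p.
  by rewrite -{1}h_p0 history_eq_consistent h_p0.
have -> : [set p in Smn m n | history G p j == h] = consistent_words m h.
  by apply/setP => p; rewrite !inE history_eq.
have -> : [set p in Smn m n | (tnth p j == i) && (history G p j == h)]
          = [set p in consistent_words m h | tnth p j == i].
  by apply/setP => p; rewrite !inE history_eq -andbA [(_ == i) && _]andbC.
have cons_p0 : p0 \in consistent_words m h by rewrite inE S_p0 -history_eq h_p0 /=.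
exact: (hits_ratio_le size_h cons_p0 D_gt0).
Qed.
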